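(* Let $n \geq 1$. The map $\Psi_n$ defined below is a bijection from the set of strong compositions of $n$ onto the set of subsets of $[n-1]$, and whenever $\Psi_n(\alpha) = I$ we have \[ n - \ell(\alpha) = |I| \qquad\text{and}\qquad 2b(\alpha) - \binom{\ell(\alpha)}{2} + \operatorname{coinv}(\alpha) = \binom{n}{2} - \operatorname{Sum}(I). \] Consequently, \[ \sum_{\alpha \vDash n} z^{n-\ell(\alpha)} q^{2b(\alpha) - \binom{\ell(\alpha)}{2} + \operatorname{coinv}(\alpha)} = \sum_{I \subset [n-1]} z^{|I|} q^{\binom{n}{2} - \operatorname{Sum}(I)}. \]
   Context: A strong composition $\alpha \vDash n$ is a sequence $(\alpha_1, \ldots, \alpha_\ell)$ of positive integers summing to $n$; $\ell(\alpha)$ is its length. $\operatorname{coinv}(\alpha) = \#\{1 \leq i < j \leq \ell(\alpha) : \alpha_i < \alpha_j\}$. If $\mu = (\mu_1 \geq \mu_2 \geq \cdots)$ is the weakly decreasing rearrangement of $\alpha$, then $b(\alpha) = \sum_i (i-1)\mu_i$. For $I \subset [n-1]$, $\operatorname{Sum}(I) = \sum_{i \in I} i$. Definition of $\Psi_n$: draw $\alpha$ as a left-justified diagram whose $i$-th row from the top has $\alpha_i$ cells. For $t \geq 1$ let $m_t$ be the number of cells in columns $1, \ldots, t$. For each $t \geq 1$, list the rows $r_1 < r_2 < \cdots < r_p$ (top to bottom) having at least $t$ cells; for each $q \in \{1, \ldots, p\}$ such that row $r_q$ has at least $t+1$ cells, write the number $m_t - (q-1)$ in the cell of row $r_q$ in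 column $t+1$. (Equivalently: fill the second column top to bottom with $m_1, m_1 - 1, \ldots$, skipping missing cells, then delete the first column and empty rows and repeat with maximum $m_2$, and so on.) Then $\Psi_n(\alpha)$ is the set of all numbers written. For example $\Psi_{11}(1,3,2,1,3,1) = \{2,4,5,7,9\}$. *)

From mathcomp Require Import all_boot all_order all_algebra.
Set Implicit Arguments. Unset Strict Implicit. Unset Printing Implicit Defensive.

Definition is_comp (n : nat) (a : seq nat) : bool :=
  all (fun x => 0 < x) a && (sumn a == n).

Definition coinv (a : seq nat) : nat :=
  \sum_(i < size a) \sum_(j < size a | i < j) (nth 0 a i < nth 0 a j).

(* b(a) = sum_i (i-1) mu_i, mu = weakly decreasing rearrangement (0-indexed here) *)
Definition bstat (a : seq nat) : nat :=
  let mu := sort geq a in \sum_(i < size mu) i * nth 0 mu i.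

(* m_t = number of cells in columns 1..t *)
Definition mcells (a : seq nat) (t : nat) : nat := sumn [seq minn x t | x <- a].

Definition rows_ge (a : seq nat) (t : nat) : seq nat := [seq x <- a | t <= x].

(* numbers written in column t+1: m_t - (q-1) for q (1-indexed) with row r_q of
   length >= t+1; here i = q-1 is 0-indexed. *)
Definition psi_col (a : seq nat) (t : nat) : seq nat :=
  [seq mcells a t - i | i <- iota 0 (size (rows_ge a t)) & t < nth 0 (rows_ge a t) i].

(* all numbers written, for t = 1, 2, ..., sumn a (larger t write nothing) *)
Definition psi_list (a : seq nat) : seq nat :=
  flatten [seq psi_col a t | t <- iota 1 (sumn a)].

(* Psi_n(a) as a subset of {0,...,n-1} (Psi_n(a) is shown to lie in [n-1]). *)
Definition Psi (n : nat) (a : seq nat) : {set 'I_n} :=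
  [set i : 'I_n | val i \in psi_list a].

From mathcomp Require Import all_boot all_order all_algebra.
From mathcomp Require Import zify.
Import GRing.Theory.
Set Implicit Arguments. Unset Strict Implicit. Unset Printing Implicit Defensive.

(* Deleting the first column of the diagram of a composition a of length l
   (the map [shrink]) relates Psi(a) to Psi(shrink a): the second column
   receives the labels l - i for the rows i of length at least 2, all in
   [1, l], and every other label is l plus a label of shrink a.  By induction,
   Psi(a) consists of n - l distinct numbers of [1, n-1], and a is recovered
   from Psi(a): l = n - |Psi(a)|, the labels up to l tell which rows have
   length at least 2, and the larger ones give Psi(shrink a).  Both sides of
   the statistic identity obey the same recursion, since removing the first
   column lowers b by C(l, 2).  Surjectivity follows by counting: there are
   2^(n-1) compositions of n and 2^(n-1) subsets of [n-1]. *)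

Definition pos_parts (a : seq nat) : bool := all (fun x => 0 < x) a.

(* The diagram of [shrink a] is that of [a] with its first column and the
   emptied rows deleted. *)
Definition shrink (a : seq nat) : seq nat := [seq x.-1 | x <- a & 1 < x].

(* The labels written in the second column: the row of [x] receives
   [(size s).+1], the number of rows from it to the bottom of the diagram. *)
Fixpoint col2 (a : seq nat) : seq nat :=
  if a is x :: s then (if 1 < x then [:: (size s).+1] else [::]) ++ col2 s
  else [::].

Lemma shrink_cons x s :
  shrink (x :: s) = if 1 < x then x.-1 :: shrink s else shrink s.
Proof. by rewrite /shrink /=; case: ifP. Qed.

Lemma mem_leq_sumn (a : seq nat) x : x \in a -> x <= sumn a.
Proof. by elim: a => //= y s IH; rewrite in_cons => /orP[/eqP->|/IH]; lia. Qed.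

Lemma size_le_sumn a : pos_parts a -> size a <= sumn a.
Proof. by elim: a => //= x s IH /andP[x_gt0 /IH]; lia. Qed.

Lemma pos_parts_shrink a : pos_parts (shrink a).
Proof. by apply/allP => y /mapP[x]; rewrite mem_filter => /andP[/= x_gt1 _] ->; lia. Qed.

Lemma sumn_shrink a : pos_parts a -> sumn a = size a + sumn (shrink a).
Proof.
rewrite /shrink; elim: a => //= x s IH /andP[x_gt0 /IH->].
by case: ifP => /=; lia.
Qed.

Lemma shrink_ind (P : seq nat -> Prop) :
  P [::] -> (forall a, pos_parts a -> a != [::] -> P (shrink a) -> P a) ->
  forall a, pos_parts a -> P a.
Proof.
move=> P0 IHa a; move: {2}(sumn a).+1 (ltnSn (sumn a)) => N.
elim: N a => // N IH [|x s] // lt_aN pa; apply: IHa => //.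
by apply: IH (pos_parts_shrink _); move: lt_aN; rewrite (sumn_shrink pa) /=; lia.
Qed.

Lemma col2_range a x : x \in col2 a -> 0 < x <= size a.
Proof.
elim: a => //= y s IH; rewrite mem_cat => /orP[| /IH]; last by lia.
by case: ifP => // _; rewrite inE => /eqP->; lia.
Qed.

Lemma uniq_col2 a : uniq (col2 a).
Proof.
elim: a => //= y s IH; case: ifP => //= _; rewrite IH andbT.
by apply/negP => /col2_range; lia.
Qed.

Lemma size_col2 a : size (col2 a) = size (shrink a).
Proof. by rewrite size_map size_filter; elim: a => //= y s <-; case: ifP. Qed.

Lemma mem_col2 a i : i < size a -> (size a - i \in col2 a) = (1 < nth 0 a i).
Proof.
elim: a i => //= y s IH [_ | i /IH <-]; rewrite mem_cat.
  rewrite subn0; case: ifP => _; first by rewrite mem_head.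
  by apply/negP => /col2_range; lia.
by rewrite subSS; case: ifP => //= _; rewrite inE; case: eqP => //=; lia.
Qed.

Lemma col2E a : col2 a = [seq size a - i | i <- iota 0 (size a) & 1 < nth 0 a i].
Proof.
elim: a => //= x s ->.
have -> : iota 1 (size s) = map succn (iota 0 (size s)) by exact: (iotaDl 1 0).
rewrite filter_map.
by case: ifP => _ /=; rewrite -map_comp; [congr cons|]; apply: eq_map => i /=; rewrite subSS.
Qed.

Lemma mcellsS a t : pos_parts a -> mcells a t.+1 = size a + mcells (shrink a) t.
Proof.
rewrite /mcells /shrink; elim: a => //= x s IH /andP[x_gt0 /IH->].
by case: x x_gt0 => // -[|x] _ /=; rewrite ?minnSS; lia.
Qed.

Lemma psi_col1 a : pos_parts a -> psi_col a 1 = col2 a.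
Proof.
move=> pa; have rows_a : rows_ge a 1 = a by apply/all_filterP.
have mcells_a : mcells a 1 = size a.
  by rewrite /mcells; elim: a {rows_a} pa => //= x s IH /andP[x_gt0 /IH->]; lia.
by rewrite /psi_col rows_a mcells_a col2E.
Qed.

Lemma rows_ge_shrink a t : 0 < t ->
  rows_ge (shrink a) t = map predn (rows_ge a t.+1).
Proof.
move=> t_gt0; rewrite /rows_ge /shrink filter_map -filter_predI.
by congr map; apply: eq_filter => x /=; lia.
Qed.

Lemma size_rows_ge a t : 0 < t -> size (rows_ge a t) <= mcells a t.
Proof. by rewrite /rows_ge /mcells => t_gt0; elim: a => //= x s; case: ifP => /=; lia. Qed.

Lemma psi_colS a t : pos_parts a -> 0 < t ->
  psi_col a t.+1 = map (addn (size a)) (psi_col (shrink a) t).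
Proof.
move=> pa t_gt0; rewrite /psi_col mcellsS // -map_comp.
have := size_rows_ge (shrink a) t_gt0; rewrite rows_ge_shrink // size_map.
set r := rows_ge a t.+1 => size_r.
have -> : [seq i <- iota 0 (size r) | t < nth 0 (map predn r) i]
         = [seq i <- iota 0 (size r) | t.+1 < nth 0 r i].
  apply: eq_in_filter => i; rewrite mem_iota => /andP[_ lt_ir].
  by rewrite (nth_map 0) //; lia.
by apply/eq_in_map => i; rewrite mem_filter mem_iota => /and3P[_ _ lt_ir] /=; lia.
Qed.

Lemma psi_col_eq_nil a t : sumn a <= t -> psi_col a t = [::].
Proof.
rewrite /psi_col => le_at; set r := rows_ge a t.
rewrite (@eq_in_filter _ _ pred0) ?filter_pred0 // => i; rewrite mem_iota => /andP[_ lt_ir].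
have /mem_leq_sumn : nth 0 r i \in a.
  by move: (mem_nth 0 lt_ir); rewrite mem_filter => /andP[].
by rewrite /=; lia.
Qed.

Lemma psi_list_iota a N : sumn a <= N ->
  flatten [seq psi_col a t | t <- iota 1 N] = psi_list a.
Proof.
move=> le_aN; rewrite /psi_list -(subnKC le_aN) iotaD map_cat flatten_cat.
set high := iota _ (N - sumn a).
have -> : [seq psi_col a t | t <- high] = [seq [::] | t <- high].
  by apply/eq_in_map => t; rewrite mem_iota => /andP[le_t _]; apply: psi_col_eq_nil; lia.
by elim: high => [|t high IH]; rewrite /= ?cats0.
Qed.

Lemma psi_listE a : pos_parts a ->
  psi_list a = col2 a ++ map (addn (size a)) (psi_list (shrink a)).
Proof.
move=> pa; rewrite -(psi_list_iota (leqnSn (sumn a))) /= psi_col1 //; congr cat.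
have le_shrink : sumn (shrink a) <= sumn a by rewrite (sumn_shrink pa) leq_addl.
rewrite -(psi_list_iota le_shrink) map_flatten -map_comp.
have -> : iota 2 (sumn a) = map succn (iota 1 (sumn a)) by exact: (iotaDl 1 1).
rewrite -map_comp; congr flatten; apply/eq_in_map => t.
by rewrite mem_iota => /andP[t_gt0 _] /=; rewrite psi_colS.
Qed.

Lemma psi_list_range a : pos_parts a -> forall x, x \in psi_list a -> 0 < x < sumn a.
Proof.
elim/shrink_ind => // {}a pa _ IH x; rewrite psi_listE // mem_cat.
case/orP => [x_col2 | /mapP[y /IH y_range ->]]; last by rewrite (sumn_shrink pa); lia.
have shrink_gt0 : 0 < size (shrink a) by rewrite -size_col2; case: (col2 a) x_col2.
have := size_le_sumn (pos_parts_shrink a); have := col2_range x_col2.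
by rewrite (sumn_shrink pa); lia.
Qed.

Lemma size_psi_list a : pos_parts a -> size (psi_list a) = sumn a - size a.
Proof.
elim/shrink_ind => // {}a pa _ IH; rewrite psi_listE // size_cat size_map IH.
by have := size_le_sumn (pos_parts_shrink a); rewrite size_col2 (sumn_shrink pa); lia.
Qed.

Lemma uniq_psi_list a : pos_parts a -> uniq (psi_list a).
Proof.
elim/shrink_ind => // {}a pa _ IH; rewrite psi_listE // cat_uniq uniq_col2.
rewrite map_inj_uniq ?IH ?andbT //; last exact: addnI.
apply/hasP => -[_ /mapP[y /(psi_list_range (pos_parts_shrink a)) y_range ->]].
by move/col2_range; lia.
Qed.

Lemma mem_psi_list_low a x : pos_parts a -> x <= size a ->
  (x \in psi_list a) = (x \in col2 a).
Proof.
move=> pa le_xa; rewrite psi_listE // mem_cat orb_idr // => /mapP[y].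
by move=> /(psi_list_range (pos_parts_shrink a)); lia.
Qed.

Lemma mem_psi_list_high a y : pos_parts a -> 0 < y ->
  (size a + y \in psi_list a) = (y \in psi_list (shrink a)).
Proof.
move=> pa y_gt0; rewrite psi_listE // mem_cat mem_map; last exact: addnI.
by rewrite orb_idl // => /col2_range; lia.
Qed.

Lemma eq_from_shrink a b : pos_parts a -> pos_parts b -> size a = size b ->
  (forall i, i < size a -> (1 < nth 0 a i) = (1 < nth 0 b i)) ->
  shrink a = shrink b -> a = b.
Proof.
elim: a b => [|x s IH] [|y t] //= /andP[x_gt0 ps] /andP[y_gt0 pt] [size_st] rows.
have rows0 : (1 < x) = (1 < y) by exact: (rows 0).
have rowsS i : i < size s -> (1 < nth 0 s i) = (1 < nth 0 t i) by exact: (rows i.+1).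
rewrite /shrink /= -rows0.
by case: ifP => x_gt1 => [[xy shrink_st] | shrink_st]; rewrite (IH t) //; congr cons; lia.
Qed.

Lemma psi_list_inj a : pos_parts a -> forall b, pos_parts b ->
  sumn a = sumn b -> psi_list a =i psi_list b -> a = b.
Proof.
elim/shrink_ind => [|{}a pa _ IH] b pb sum_ab psi_ab.
  by have := size_le_sumn pb; rewrite -sum_ab; case: b {pb sum_ab psi_ab}.
have size_ab : size a = size b.
  have := perm_size (uniq_perm (uniq_psi_list pa) (uniq_psi_list pb) psi_ab).
  rewrite !size_psi_list // -sum_ab.
  by have := size_le_sumn pa; have := size_le_sumn pb; lia.
apply: eq_from_shrink => // [i lt_ia|].
  rewrite -!mem_col2 -?size_ab // -!mem_psi_list_low -?size_ab ?psi_ab //; lia.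
apply: IH (pos_parts_shrink b) _ _ => [|[|y]].
- by have := sumn_shrink pa; have := sumn_shrink pb; lia.
- by apply/idP/idP => /psi_list_range; rewrite ?pos_parts_shrink /=; lia.
- by rewrite -mem_psi_list_high // psi_ab size_ab mem_psi_list_high.
Qed.

Lemma coinv_cons x s : coinv (x :: s) = count (ltn x) s + coinv s.
Proof.
rewrite /coinv /= big_ord_recl /=; congr addn.
  rewrite big_mkcond big_ord_recl /= -sumn_count sumnE big_map (big_nth 0) big_mkord.
  by apply: eq_bigr.
apply: eq_bigr => i _; rewrite big_mkcond big_ord_recl /= [in RHS]big_mkcond.
by apply: eq_bigr.
Qed.

Lemma min_pairs_sorted s : sorted geq s ->
  \sum_(x <- s) \sum_(y <- s) minn x y = 2 * \sum_(i < size s) i * nth 0 s i + sumn s.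
Proof.
elim: s => [|x s IH] sorted_xs; first by rewrite big_nil big_ord0.
have le_sx : all (geq x) s by apply: order_path_min sorted_xs => ? ? ?; lia.
have row_x : \sum_(y <- s) minn x y = sumn s.
  by rewrite sumnE; apply: eq_big_seq => y /(allP le_sx) /=; lia.
have col_x : \sum_(j <- s) \sum_(y <- x :: s) minn j y
    = sumn s + \sum_(j <- s) \sum_(y <- s) minn j y.
  rewrite sumnE -big_split; apply: eq_big_seq => j /(allP le_sx) /= le_jx.
  by rewrite big_cons /=; lia.
have weights_xs : \sum_(i < size (x :: s)) i * nth 0 (x :: s) i
    = \sum_(i < size s) i * nth 0 s i + sumn s.
  rewrite big_ord_recl /= mul0n add0n sumnE (big_nth 0) big_mkord -big_split.
  by apply: eq_bigr => i _; rewrite /bump /= add0n add1n mulSn addnC.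
rewrite big_cons col_x big_cons minnn row_x weights_xs IH ?(path_sorted sorted_xs) /=; lia.
Qed.

Lemma bstat_min_pairs a :
  2 * bstat a + sumn a = \sum_(x <- a) \sum_(y <- a) minn x y.
Proof.
have perm_a : perm_eq (sort geq a) a by rewrite perm_sort.
rewrite -(perm_sumn perm_a) /bstat -min_pairs_sorted; last first.
  by apply: sort_sorted => m n; apply: leq_total.
by rewrite (perm_big _ perm_a); apply: eq_bigr => x _; apply: perm_big.
Qed.

Lemma bstat_cons x s : bstat (x :: s) = \sum_(y <- s) minn x y + bstat s.
Proof.
have col_x : \sum_(j <- s) \sum_(y <- x :: s) minn j y
    = \sum_(y <- s) minn x y + \sum_(j <- s) \sum_(y <- s) minn j y.
  by rewrite -big_split; apply: eq_bigr => j _; rewrite big_cons minnC.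
have := bstat_min_pairs (x :: s); have := bstat_min_pairs s.
by rewrite big_cons col_x big_cons minnn /=; lia.
Qed.

Lemma sum_minn_shrink x s : pos_parts s -> 0 < x ->
  \sum_(y <- s) minn x y = size s + \sum_(y <- shrink s) minn x.-1 y.
Proof.
rewrite /shrink; elim: s => [|y s IH] /= ps x_gt0; first by rewrite !big_nil.
case/andP: ps => y_gt0 /IH -/(_ x_gt0) IHs.
by case: ifP => y_gt1; rewrite /= !big_cons IHs; lia.
Qed.

Lemma bstat_shrink a : pos_parts a -> bstat a = 'C(size a, 2) + bstat (shrink a).
Proof.
elim: a => [|x s IH] /=; first by rewrite /bstat big_ord0.
case/andP=> x_gt0 ps; rewrite bstat_cons IH // sum_minn_shrink // binS bin1.
rewrite shrink_cons; case: ifP => [_ | x_le1]; first by rewrite bstat_cons; lia.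
have -> : x = 1 by lia.
by rewrite big1 => [|y _]; [lia | apply: min0n].
Qed.

Lemma count_ltn_shrink x s : 0 < x -> count (ltn x) s = count (ltn x.-1) (shrink s).
Proof.
move=> x_gt0; rewrite /shrink count_map count_filter.
by apply: eq_count => y /=; lia.
Qed.

Lemma coinv_shrink a : pos_parts a ->
  coinv a + sumn (col2 a) + 'C(size (shrink a), 2)
  = coinv (shrink a) + size (shrink a) * size a.
Proof.
elim: a => [|x s IH] /=; first by rewrite /coinv /= !big_ord0.
case/andP=> x_gt0 /IH IHs; rewrite coinv_cons (count_ltn_shrink _ x_gt0) shrink_cons.
case: ifP => x_gt1 /=; first by rewrite coinv_cons binS bin1; nia.
have -> : x = 1 by lia.
have -> : count (ltn 0) (shrink s) = size (shrink s).
  by apply/eqP; rewrite -all_count; apply: pos_parts_shrink.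
nia.
Qed.

Lemma bin2D m k : 'C(m + k, 2) = 'C(m, 2) + 'C(k, 2) + m * k.
Proof. by elim: k => [|k IH]; rewrite ?addn0 ?bin0n ?addnS ?binS ?bin1 ?IH; lia. Qed.

Lemma sumn_map_addn l s : sumn (map (addn l) s) = l * size s + sumn s.
Proof. by elim: s => [|y s IH] /=; rewrite ?IH; lia. Qed.

Lemma psi_list_stat a : pos_parts a ->
  2 * bstat a + coinv a + sumn (psi_list a) = 'C(sumn a, 2) + 'C(size a, 2).
Proof.
elim/shrink_ind => [|{}a pa _ IH]; first by rewrite /bstat /coinv /= !big_ord0.
have := coinv_shrink pa; have := size_le_sumn (pos_parts_shrink a).
rewrite psi_listE // sumn_cat sumn_map_addn size_psi_list ?pos_parts_shrink //.
(* With l = size a, k = size (shrink a) and m = sumn (shrink a), both sides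
   exceed their values at [shrink a] by 2 C(l, 2) + l m - C(k, 2). *)
rewrite bstat_shrink // (sumn_shrink pa) bin2D; nia.
Qed.

Fixpoint compositions n : seq (seq nat) :=
  if n is m.+1 then [seq 1 :: a | a <- compositions m] ++
     [seq (head 0 a).+1 :: behead a | a <- compositions m & a != [::]]
  else [:: [::]].

Lemma is_comp_cons n x s : is_comp n (x :: s) = [&& 0 < x, x <= n & is_comp (n - x) s].
Proof. by rewrite /is_comp /=; case: all; rewrite ?andbF //=; apply/idP/idP; lia. Qed.

Lemma mem_compositions n a : (a \in compositions n) = is_comp n a.
Proof.
elim: n a => [|n IH] [|x s] //=; rewrite ?is_comp_cons ?mem_cat //.
- by rewrite inE; case: x.
- by apply/negbTE/norP; split; apply/negP => /mapP[].
apply/orP/idP => [[/mapP[b] | /mapP[[|y b]]] | ].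
- by rewrite IH => comp_b [-> ->]; rewrite subSS subn0.
- by rewrite mem_filter.
- rewrite mem_filter IH => /andP[_ comp_yb] [-> ->].
  by move: comp_yb; rewrite !is_comp_cons subSS !ltnS => /and3P[_ -> ->].
case: x => [|[|y]] //=; rewrite subSS.
  by rewrite subn0 => comp_s; left; apply/mapP; exists s; rewrite ?IH.
move=> comp_ys; right; apply/mapP; exists (y.+1 :: s) => //.
by rewrite mem_filter IH is_comp_cons.
Qed.

Lemma uniq_compositions n : uniq (compositions n).
Proof.
elim: n => [|n IH] //=; rewrite cat_uniq map_inj_uniq ?IH //; last by move=> ? ? [].
rewrite map_inj_in_uniq ?filter_uniq ?andbT //; last first.
  by move=> [|x s] [|y t]; rewrite !mem_filter //= => _ _ [-> ->].
apply/hasPn => a /mapP[[|x s]]; rewrite mem_filter mem_compositions ?is_comp_cons //=.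
by move=> /and3P[x_gt0 _ _] ->; apply/mapP => -[b _ [x0 _]]; lia.
Qed.

Lemma size_compositions n : size (compositions n.+1) = 2 ^ n.
Proof.
elim: n => [|n IH] //; rewrite -[compositions n.+2]/(_ ++ _) size_cat !size_map.
have -> : [seq a <- compositions n.+1 | a != [::]] = compositions n.+1.
  by apply/all_filterP/allP => -[|x s] //; rewrite mem_compositions.
by rewrite IH expnS mul2n addnn.
Qed.

Lemma sum_comp_tuples (R : nmodType) n (F : nat -> seq nat -> R) :
  (\sum_(l < n.+1) \sum_(t : l.-tuple 'I_n.+1 | is_comp n (map val t)) F l (map val t)
   = \sum_(a <- compositions n) F (size a) a)%R.
Proof.
have tuples_of l : perm_eq
    [seq map val t | t : l.-tuple 'I_n.+1 <- index_enum _ & is_comp n (map val t)]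
    [seq a <- compositions n | size a == l].
  apply: uniq_perm; rewrite ?filter_uniq ?uniq_compositions //.
    rewrite map_inj_uniq ?filter_uniq ?index_enum_uniq //.
    by move=> t u /(inj_map val_inj) /val_inj.
  move=> a; rewrite mem_filter mem_compositions; apply/mapP/andP => [[t] | [/eqP size_a ca]].
    by rewrite mem_filter => /andP[ct _] ->; rewrite size_map size_tuple.
  have size_t : size (map (@inord n) a) == l by rewrite size_map size_a.
  have val_t : map val (Tuple size_t) = a.
    rewrite /= -map_comp map_id_in // => x x_a /=; rewrite inordK //.
    by case/andP: ca => _ /eqP <-; rewrite ltnS mem_leq_sumn.
  by exists (Tuple size_t); rewrite // mem_filter mem_index_enum val_t ca.
under eq_bigr => l _ do
  rewrite -big_filter -(big_map _ xpredT (F l)) (perm_big _ (tuples_of l)) big_filter.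
under eq_bigr do rewrite big_mkcond.
rewrite exchange_big; apply: eq_big_seq => a.
rewrite mem_compositions => /andP[pa /eqP sum_a].
have lt_a : size a < n.+1 by rewrite ltnS -sum_a size_le_sumn.
by rewrite -big_mkcond (big_pred1 (Ordinal lt_a)) // => l; rewrite eq_sym -val_eqE.
Qed.

Lemma perm_enum_val_mem n (L : seq nat) : uniq L -> all (gtn n) L ->
  perm_eq [seq val i | i <- enum [set i : 'I_n | val i \in L]] L.
Proof.
move=> uniq_L /allP L_lt; apply: uniq_perm => //.
  by rewrite (map_inj_uniq val_inj) enum_uniq.
move=> x; apply/mapP/idP => [[i] | x_L]; first by rewrite mem_enum inE => ? ->.
by exists (Ordinal (L_lt x x_L)); rewrite ?mem_enum ?inE.
Qed.

Lemma comp_psi_range n a : is_comp n a -> forall x, x \in psi_list a -> 0 < x < n.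
Proof. by case/andP=> pa /eqP <-; apply: psi_list_range. Qed.

Lemma perm_Psi n a : is_comp n a -> perm_eq [seq val i | i <- enum (Psi n a)] (psi_list a).
Proof.
move=> ca; apply: perm_enum_val_mem; first by apply: uniq_psi_list; case/andP: ca.
by apply/allP => x /(comp_psi_range ca) /andP[].
Qed.

Lemma card_Psi n a : is_comp n a -> #|Psi n a| = n - size a.
Proof.
move=> ca; rewrite cardE -(size_map val) (perm_size (perm_Psi ca)).
by case/andP: ca => pa /eqP <-; rewrite size_psi_list.
Qed.

Lemma sum_Psi n a : is_comp n a -> \sum_(i in Psi n a) val i = sumn (psi_list a).
Proof.
by move=> ca; rewrite -big_enum -(big_map val xpredT id) (perm_big _ (perm_Psi ca)) sumnE.
Qed.

Lemma Psi_stat n a : is_comp n a ->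
  2 * bstat a + coinv a + \sum_(i in Psi n a) val i = 'C(n, 2) + 'C(size a, 2).
Proof.
by move=> ca; rewrite sum_Psi //; case/andP: ca => pa /eqP <-; apply: psi_list_stat.
Qed.

Lemma Psi_inj n a b : is_comp n a -> is_comp n b -> Psi n a = Psi n b -> a = b.
Proof.
move=> ca cb Psi_ab; move: (ca) (cb) => /andP[pa /eqP sum_a] /andP[pb /eqP sum_b].
apply: psi_list_inj => // [|x]; first by rewrite sum_a sum_b.
case: (ltnP x n) => [lt_xn | le_nx].
  by move/setP: Psi_ab => /(_ (Ordinal lt_xn)); rewrite !inE.
by apply/idP/idP => [/(comp_psi_range ca) | /(comp_psi_range cb)]; lia.
Qed.

Definition pos_subsets n : {set {set 'I_n}} :=
  [set I : {set 'I_n} | [forall i in I, 0 < val i]].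

Lemma card_pos_subsets n : #|pos_subsets n.+1| = 2 ^ n.
Proof.
suff -> : pos_subsets n.+1 = powerset [set~ ord0] by rewrite card_powerset cardsC1 card_ord.
apply/setP => I; rewrite !inE.
by apply/forall_inP/subsetP => I_pos i /I_pos; rewrite !inE -val_eqE lt0n.
Qed.

Lemma perm_Psi_compositions n :
  perm_eq [seq Psi n.+1 a | a <- compositions n.+1] (enum (pos_subsets n.+1)).
Proof.
have uniq_Psi : uniq [seq Psi n.+1 a | a <- compositions n.+1].
  rewrite map_inj_in_uniq ?uniq_compositions // => a b.
  by rewrite !mem_compositions; apply: Psi_inj.
have sub_Psi :
    {subset [seq Psi n.+1 a | a <- compositions n.+1] <= enum (pos_subsets n.+1)}.
  move=> I /mapP[a]; rewrite mem_compositions mem_enum inE => ca ->.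
  by apply/forall_inP => i; rewrite inE => /(comp_psi_range ca) /andP[].
have le_size :
    size (enum (pos_subsets n.+1)) <= size [seq Psi n.+1 a | a <- compositions n.+1].
  by rewrite -cardE card_pos_subsets size_map size_compositions.
apply: uniq_perm; rewrite ?enum_uniq //.
exact: (uniq_min_size uniq_Psi sub_Psi le_size).2.
Qed.

Lemma Psi_surj n (I : {set 'I_n.+1}) : (forall i, i \in I -> 0 < val i) ->
  exists2 a, is_comp n.+1 a & Psi n.+1 a = I.
Proof.
move=> I_pos; have : I \in enum (pos_subsets n.+1) by rewrite mem_enum inE; apply/forall_inP.
rewrite -(perm_mem (perm_Psi_compositions n)) => /mapP[a].
by rewrite mem_compositions; exists a.
Qed.

Lemma sum_pos_subsets (R : nmodType) n (G : {set 'I_n.+1} -> R) :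
  (\sum_(I : {set 'I_n.+1} | [forall i in I, (0 < val i)%N]) G I
   = \sum_(a <- compositions n.+1) G (Psi n.+1 a))%R.
Proof.
rewrite (eq_bigl (mem (pos_subsets n.+1))) => [|I]; last by rewrite /= inE.
by rewrite -big_enum -(perm_big _ (perm_Psi_compositions n)) big_map.
Qed.

Theorem theorem1p5 (n : nat) (n_gt0 : 0 < n) :
  (* Psi_n maps compositions of n into subsets of [n-1] *)
  (forall a : seq nat, is_comp n a ->
     forall x, x \in psi_list a -> 0 < x < n)
  (* injective on compositions of n *)
  /\ (forall a b : seq nat, is_comp n a -> is_comp n b ->
        Psi n a = Psi n b -> a = b)
  (* surjective onto subsets of [n-1] = {1,...,n-1} *)
  /\ (forall I : {set 'I_n}, (forall i : 'I_n, i \in I -> 0 < val i) ->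
        exists a : seq nat, is_comp n a /\ Psi n a = I)
  (* statistics *)
  /\ (forall (a : seq nat) (I : {set 'I_n}), is_comp n a -> Psi n a = I ->
        n - size a = #|I|
        /\ (2 * (bstat a)%:Z - ('C(size a, 2))%:Z + (coinv a)%:Z
            = ('C(n, 2))%:Z - (\sum_(i in I) (val i))%:Z)%R)
  (* generating function identity, in any commutative ring *)
  /\ (forall (R : comNzRingType) (z q : R),
        (\sum_(l < n.+1) \sum_(t : l.-tuple 'I_n.+1 | is_comp n (map val t))
            z ^+ (n - l)%N * q ^+ (2 * bstat (map val t) + coinv (map val t) - 'C(l, 2))%N
         = \sum_(I : {set 'I_n} | [forall i in I, (0 < val i)%N])
            z ^+ #|I| * q ^+ ('C(n, 2) - \sum_(i in I) val i)%N)%R).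
Proof.
case: n n_gt0 => // n _.
split; first exact: comp_psi_range.
split; first exact: Psi_inj.
split; first by move=> I /Psi_surj[a]; exists a.
split => [a I ca <- | R z q].
  by rewrite card_Psi //; split => //; have := Psi_stat ca; lia.
pose F l a := (z ^+ (n.+1 - l)%N * q ^+ (2 * bstat a + coinv a - 'C(l, 2))%N)%R.
rewrite (sum_comp_tuples n.+1 F) sum_pos_subsets.
apply: eq_big_seq => a; rewrite mem_compositions => ca.
by rewrite card_Psi //; congr (_ * _ ^+ _)%R; have := Psi_stat ca; lia.
Qed.
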